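(* For every positive integer $n$ and every $\beta\ge 0$, there is a temporal graph $G$ on $n$ vertices and a source vertex $s$ of $G$ such that every single-source temporal $\beta$-additive spanner of $G$ with respect to $s$ has size $\Omega\big(\frac{n^2}{1+\beta}\big)$.
   Context: A temporal graph is an undirected graph $G=(V,E)$ with a labeling $\lambda:E\to\mathbb{N}^+$. A temporal path is a path whose traversed edges have non-decreasing labels in the order of traversal; its length is its number of edges, and $d_G(u,v)$ is the minimum length of a temporal path from $u$ to $v$ in $G$ ($+\infty$ if none). A single-source temporal $\beta$-additive spanner of $G$ w.r.t. $s$ is a subgraph $H$ with $V(H)=V$, $E(H)\subseteq E$ (same labels), such that $d_H(s,v)\le d_G(s,v)+\beta$ for every $v\in V$. Its size is its number of edges. *)

From mathcomp Require Import all_boot.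
Set Implicit Arguments. Unset Strict Implicit. Unset Printing Implicit Defensive.

Definition temporal_graph (n : nat) (E : {set {set 'I_n}})
    (lam : {set 'I_n} -> nat) : Prop :=
  (forall e, e \in E -> #|e| = 2) /\ (forall e, e \in E -> 0 < lam e).

(* x :: p (p the list of vertices after the start u) is a temporal path from
   u to v in (E, lam): consecutive vertices are adjacent, vertices are
   pairwise distinct, and the labels of the traversed edges are
   non-decreasing in the order of traversal. *)
Definition is_tpath (n : nat) (E : {set {set 'I_n}}) (lam : {set 'I_n} -> nat)
    (u v : 'I_n) (p : seq 'I_n) : bool :=
  [&& last u p == v, uniq (u :: p),
      path (fun x y => [set x; y] \in E) u p &
      sorted leq (pairmap (fun x y => lam [set x; y]) u p)].

(* Simple paths have
   length < n, so searching lengths 0 .. n-1 suffices. *)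
Definition tdist (n : nat) (E : {set {set 'I_n}}) (lam : {set 'I_n} -> nat)
    (u v : 'I_n) : option nat :=
  let k := find (fun k => [exists p : k.-tuple 'I_n, is_tpath E lam u v p])
                (iota 0 n) in
  if k < n then Some k else None.

(* a <= b + beta in N u {+oo}, with None = +oo. *)
Definition ext_le_add (a b : option nat) (beta : nat) : bool :=
  match b with
  | None => true
  | Some y => match a with Some x => x <= y + beta | None => false end
  end.

Definition ss_additive_spanner (n : nat) (E : {set {set 'I_n}})
    (lam : {set 'I_n} -> nat) (s : 'I_n) (beta : nat) (EH : {set {set 'I_n}})
    : Prop :=
  EH \subset E /\ forall v : 'I_n, ext_le_add (tdist EH lam s v) (tdist E lam s v) beta.

From Stdlib Require Import ZArith Lia.
From mathcomp Require Import all_boot zify.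

(* The graph is a union of R temporal paths ("bands") of length L + 1 from the
   source: band r carries the label r + 1 on all its edges and ends at its own
   target t_r.  The bands share vertices but no edge, so with L ~ n / 4 and
   R ~ n / (16 D) there are about n^2 / (64 D) edges.  All of them are needed,
   by a potential argument: let pos l x be the position of x on band l - 1.
   An edge of label l changes pos l by exactly one, and raising the label from
   l to l' lowers the position of every vertex but the source by at least
   D (l' - l).  So a temporal path from s to t_r whose first label is l has at
   least L + 1 + D (r + 1 - l) edges; if it has fewer than L + 1 + D, it uses
   the label r + 1 only and, moving pos (r + 1) from 0 to L + 1 in unit steps,
   it crosses every edge of band r.  With D = beta + 3 > beta this applies to
   the shortest temporal paths of any beta-additive spanner. *)

Set Implicit Arguments.
Unset Strict Implicit.

Lemma path_leq_last (a : nat) s : path leq a s -> a <= last a s.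
Proof.
move=> /(order_path_min leq_trans)/allP a_le.
by have := mem_last a s; rewrite inE => /predU1P[-> //|/a_le].
Qed.

Lemma path_leq_const (a : nat) s : path leq a s -> last a s <= a -> all (pred1 a) s.
Proof.
elim: s a => [//|b s IHs] a /= /andP[ab bs] sa.
have ba : b <= a := leq_trans (path_leq_last bs) sa.
have /eqP eq_ba : b == a by rewrite eqn_leq ab ba.
by subst b; rewrite eqxx IHs.
Qed.

Lemma eq_set2 (T : finType) (x y x' y' : T) :
  [set x; y] = [set x'; y'] -> (x = x' /\ y = y') \/ (x = y' /\ y = x').
Proof.
move=> eq_xy.
have : x \in [set x'; y'] by rewrite -eq_xy set21.
have : y \in [set x'; y'] by rewrite -eq_xy set22.
have : x' \in [set x; y] by rewrite eq_xy set21.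
have : y' \in [set x; y] by rewrite eq_xy set22.
rewrite !inE => /orP[] /eqP y'E /orP[] /eqP x'E /orP[] /eqP yE /orP[] /eqP xE;
  subst; tauto.
Qed.

Lemma sorted_nseq (T : Type) (e : rel T) (x : T) k : e x x -> sorted e (nseq k x).
Proof. by move=> exx; case: k => //= k; elim: k => //= k ->; rewrite exx. Qed.

Section TemporalDistance.
Variables (n : nat) (E : {set {set 'I_n}}) (lam : {set 'I_n} -> nat).

Lemma tdist_Some_tpath u v k :
  tdist E lam u v = Some k -> exists2 p : seq 'I_n, is_tpath E lam u v p & size p = k.
Proof.
rewrite /tdist; set P := fun k => [exists p : k.-tuple 'I_n, is_tpath E lam u v p].
case: ifP => // k_lt [<-].
have /(nth_find 0) : has P (iota 0 n) by rewrite has_find size_iota.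
rewrite nth_iota // add0n => /existsP[p p_tpath].
by exists p; rewrite ?size_tuple.
Qed.

Lemma tpath_tdist_le u v p :
  is_tpath E lam u v p -> size p < n -> exists2 k, tdist E lam u v = Some k & k <= size p.
Proof.
move=> p_tpath p_lt; rewrite /tdist.
set P := fun k => [exists p : k.-tuple 'I_n, is_tpath E lam u v p].
have Pp : P (size p) by apply/existsP; exists (in_tuple p).
have find_le : find P (iota 0 n) <= size p.
  rewrite leqNgt; apply/negP => /(before_find 0).
  by rewrite nth_iota // add0n Pp.
by rewrite (leq_ltn_trans find_le p_lt); exists (find P (iota 0 n)).
Qed.

End TemporalDistance.

Lemma spanner_short_tpath n (E EH : {set {set 'I_n}}) lam s beta v p :
  ss_additive_spanner E lam s beta EH -> is_tpath E lam s v p -> size p < n ->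
  exists2 q, is_tpath EH lam s v q & size q <= size p + beta.
Proof.
move=> [_ /(_ v)] + p_tpath p_lt; have [k -> k_le] := tpath_tdist_le p_tpath p_lt.
case dH: (tdist EH lam s v) => [k'|] //= k'_le.
have [q q_tpath q_size] := tdist_Some_tpath dH.
by exists q; rewrite // q_size (leq_trans k'_le) // leq_add2r.
Qed.

Section Potential.
Variables (n : nat) (E : {set {set 'I_n}}) (lam : {set 'I_n} -> nat) (s : 'I_n).
Variables (pos : nat -> 'I_n -> Z) (D : nat).

Local Notation walk := (path (fun x y => [set x; y] \in E)).
Local Notation labels := (pairmap (fun x y => lam [set x; y])).

Hypothesis pos_edge : forall x y, [set x; y] \in E ->
  Z.abs (pos (lam [set x; y]) x - pos (lam [set x; y]) y) = 1%Z.
Hypothesis pos_desc : forall x l l', x != s -> l <= l' ->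
  (pos l' x + Z.of_nat D * (Z.of_nat l' - Z.of_nat l) <= pos l x)%Z.
Hypothesis pos_src : forall l, pos l s = 0%Z.

Lemma walk_pos_bound (u : 'I_n) (l : nat) (q : seq 'I_n) :
  s \notin u :: q -> walk u q -> path leq l (labels u q) ->
  (pos (last l (labels u q)) (last u q)
     + Z.of_nat D * (Z.of_nat (last l (labels u q)) - Z.of_nat l)
   <= Z.of_nat (size q) + pos l u)%Z.
Proof.
elim: q u l => [|v q IHq] u l; first by move=> /= *; lia.
rewrite in_cons negb_or eq_sym => /andP[u_s v_q] /andP[uv vq] /andP[l_le lab_q].
have := IHq v _ v_q vq lab_q; have := pos_edge uv; have := pos_desc u_s l_le.
(* [/=] would also unfold the [Z] arithmetic *)
cbn [last pairmap size]; lia.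
Qed.

Lemma walk_pos_crossing (c : nat) (u : 'I_n) (q : seq 'I_n) (p : Z) :
  walk u q -> all (pred1 c) (labels u q) -> (pos c u <= p < pos c (last u q))%Z ->
  exists x y,
    [/\ [set x; y] \in E, lam [set x; y] = c, pos c x = p & pos c y = (p + 1)%Z].
Proof.
elim: q u => [|v q IHq] u /=; first lia.
move=> /andP[uv vq] /andP[/eqP lab_uv lab_q] p_range.
have := pos_edge uv; rewrite lab_uv => step.
have [vp|pv] := Z_le_gt_dec (pos c v) p.
  by apply: (IHq v) => //; split; [exact: vp | case: p_range].
by exists u, v; split => //; lia.
Qed.

Lemma last_walk_labels (c : nat) (u : 'I_n) (q : seq 'I_n) (l : nat) :
  walk u q -> q != [::] ->
  (forall x, [set x; last u q] \in E -> lam [set x; last u q] = c) ->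
  last l (labels u q) = c.
Proof.
elim: q u l => [//|v [|w q] IHq] u l /= /andP[uv vq] _ lab_last; first exact: lab_last.
exact: IHq.
Qed.

Lemma short_tpath_labels (t : 'I_n) (c : nat) (q : seq 'I_n) :
  is_tpath E lam s t q -> (forall x, [set x; t] \in E -> lam [set x; t] = c) ->
  (Z.of_nat (size q) < pos c t + Z.of_nat D)%Z -> all (pred1 c) (labels s q).
Proof.
case: q => [//|v q] /and4P[/eqP q_t /andP[s_q _] walk_q sorted_q] lab_t size_q.
have last_c : last 0 (labels s (v :: q)) = c by apply: last_walk_labels; rewrite ?q_t.
move: q_t last_c sorted_q walk_q size_q; rewrite /=; set l1 := lam [set s; v].
move=> q_t last_c sorted_q /andP[sv vq] size_q.
have bound := walk_pos_bound s_q vq sorted_q; rewrite last_c q_t in bound.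
have := pos_edge sv; rewrite pos_src -/l1 => pos_v.
have c_le : c <= l1 by rewrite leqNgt; apply/negP => lt_l1; nia.
have l1_c : l1 = c.
  by apply/eqP; rewrite eqn_leq c_le andbT -[c in _ <= c]last_c path_leq_last.
by rewrite -l1_c eqxx path_leq_const // last_c l1_c.
Qed.

Lemma short_tpath_crossing (t : 'I_n) (c : nat) (q : seq 'I_n) (p : Z) :
  is_tpath E lam s t q -> (forall x, [set x; t] \in E -> lam [set x; t] = c) ->
  (Z.of_nat (size q) < pos c t + Z.of_nat D)%Z -> (0 <= p < pos c t)%Z ->
  exists x y,
    [/\ [set x; y] \in E, lam [set x; y] = c, pos c x = p & pos c y = (p + 1)%Z].
Proof.
move=> q_tpath lab_t size_q p_range.
have all_c := short_tpath_labels q_tpath lab_t size_q.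
case/and4P: q_tpath => /eqP q_t _ walk_q _.
by apply: (walk_pos_crossing walk_q all_c); rewrite pos_src q_t.
Qed.
End Potential.

Section Bands.
Variables L D R : nat.

Local Notation A := (L + D * (R - 1)).
Local Notation B := (L + 2 * (D * (R - 1))).

Hypothesis L_gt0 : 0 < L.

(* Index of the p-th vertex of band r (p = 0 is the source, p = L + 1 the
   target).  Odd and even positions are shifted by D r and 2 D r, so that two
   bands share vertices but never an edge. *)
Definition band_index (r p : nat) : nat :=
  if p == 0 then 0
  else if p <= L then (if odd p then p + D * r else A + p + 2 * (D * r))
  else A + B + 1 + r.

Variant band_index_spec (r p : nat) : nat -> Type :=
  | BandSource of p = 0 : band_index_spec r p 0
  | BandOdd of 0 < p <= L & odd p : band_index_spec r p (p + D * r)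
  | BandEven of 0 < p <= L & ~~ odd p : band_index_spec r p (A + p + 2 * (D * r))
  | BandTarget of L < p : band_index_spec r p (A + B + 1 + r).

Lemma band_indexP r p : band_index_spec r p (band_index r p).
Proof.
rewrite /band_index; case: eqP => [|/eqP p_gt0]; first exact: BandSource.
rewrite -lt0n in p_gt0; case: leqP => [p_le|]; last exact: BandTarget.
by case: ifP => [|/negbT] p_odd; constructor; rewrite ?p_gt0.
Qed.

Lemma band_offset_le r : r < R -> D * r <= D * (R - 1).
Proof. by move=> r_lt; rewrite leq_mul2l; lia. Qed.

Lemma band_edge_ends r p : r < R -> p <= L ->
  (p = 0 /\ band_index r p = 0 /\ band_index r p.+1 = 1 + D * r) \/
  (0 < p < L /\ band_index r p = p + D * r /\
     band_index r p.+1 = A + p.+1 + 2 * (D * r)) \/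
  (0 < p < L /\ band_index r p = A + p + 2 * (D * r) /\
     band_index r p.+1 = p.+1 + D * r) \/
  (p = L /\ 0 < band_index r p <= A + B /\ band_index r p.+1 = A + B + 1 + r).
Proof.
move=> r_lt p_le; have Dr := band_offset_le r_lt.
have parity : odd p.+1 = ~~ odd p by [].
case: (band_indexP r p) => [?|/andP[? ?] o|/andP[? ?] o|?];
case: (band_indexP r p.+1) => [//|/andP[? ?] o'|/andP[? ?] o'|?];
by [rewrite parity o in o' | lia].
Qed.

Lemma band_index_edge_inj r p r' p' :
  3 <= D -> r < R -> r' < R -> p <= L -> p' <= L ->
  (band_index r p = band_index r' p' /\ band_index r p.+1 = band_index r' p'.+1) \/
  (band_index r p = band_index r' p'.+1 /\ band_index r p.+1 = band_index r' p') ->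
  r = r' /\ p = p'.
Proof.
move=> D_ge3 r_lt r'_lt p_le p'_le.
have := band_edge_ends r_lt p_le; have := band_edge_ends r'_lt p'_le.
have := band_offset_le r_lt; have := band_offset_le r'_lt.
have [lt_rr'|lt_r'r|->] := ltngtP r r'; last lia.
- have : D * r + D <= D * r' by rewrite addnC -mulnS leq_mul2l lt_rr' orbT.
  lia.
- have : D * r' + D <= D * r by rewrite addnC -mulnS leq_mul2l lt_r'r orbT.
  lia.
Qed.

Section Graph.
Variable m : nat.

Definition vertex (r p : nat) : 'I_m.+1 := inord (band_index r p).

Lemma vertex0 r : vertex r 0 = ord0.
Proof. by apply/val_inj; rewrite /= inordK. Qed.

(* [band_pos (r + 1) x = p] when x is the p-th vertex of band r; the formula
   extends this to all labels so that, at every vertex but the source, it drops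
   by at least D per unit increase of the label. *)
Definition band_pos (l : nat) (x : 'I_m.+1) : Z :=
  let z := (Z.of_nat l - 1)%Z in
  if x == 0 :> nat then 0%Z
  else if x <= A then (Z.of_nat x - Z.of_nat D * z)%Z
  else if x <= A + B then (Z.of_nat x - Z.of_nat A - 2 * Z.of_nat D * z)%Z
  else if x <= A + B + R then
    (Z.of_nat L + 1 + Z.of_nat D * (Z.of_nat x - Z.of_nat (A + B + 1) - z))%Z
  else (- Z.of_nat D * z)%Z.

Lemma band_pos0 l : band_pos l ord0 = 0%Z.
Proof. by []. Qed.

Lemma band_pos_desc x l l' : x != ord0 -> l <= l' ->
  (band_pos l' x + Z.of_nat D * (Z.of_nat l' - Z.of_nat l) <= band_pos l x)%Z.
Proof.
move=> /negbTE x_neq0 l_le; rewrite /band_pos (_ : (x == 0 :> nat) = false) //.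
by do !case: ifP => ?; nia.
Qed.

Hypothesis D_ge3 : 3 <= D.
Hypothesis bands_fit : A + B + R <= m.

Lemma band_index_le r p : r < R -> p <= L.+1 -> band_index r p <= m.
Proof. by move=> r_lt p_le; have := band_offset_le r_lt; case: band_indexP; lia. Qed.

Lemma vertexE r p : r < R -> p <= L.+1 -> vertex r p = band_index r p :> nat.
Proof. by move=> r_lt p_le; rewrite inordK // ltnS band_index_le. Qed.

Lemma band_pos_vertex r p : r < R -> p <= L.+1 -> band_pos r.+1 (vertex r p) = Z.of_nat p.
Proof.
move=> r_lt p_le; have Dr := band_offset_le r_lt.
rewrite /band_pos vertexE //; case: band_indexP => [->|*|*|*] //.
all: by do !case: ifP => ?; lia.
Qed.

Definition band_edge r p : {set 'I_m.+1} := [set vertex r p; vertex r p.+1].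

Definition band_edges : {set {set 'I_m.+1}} :=
  [set band_edge rp.1 rp.2 | rp : 'I_R * 'I_L.+1].

Definition band_label (e : {set 'I_m.+1}) : nat :=
  if [pick rp : 'I_R * 'I_L.+1 | e == band_edge rp.1 rp.2] is Some rp then rp.1.+1 else 1.

Lemma band_edge_inj r p r' p' : r < R -> r' < R -> p <= L -> p' <= L ->
  band_edge r p = band_edge r' p' -> r = r' /\ p = p'.
Proof.
move=> r_lt r'_lt p_le p'_le /eq_set2 eq_ends; apply: band_index_edge_inj => //.
rewrite -(vertexE r_lt (leqW p_le)) -(vertexE (p := p.+1) r_lt p_le).
rewrite -(vertexE r'_lt (leqW p'_le)) -(vertexE (p := p'.+1) r'_lt p'_le).
by case: eq_ends => [[-> ->]|[-> ->]]; [left | right].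
Qed.

Lemma band_label_edge r p : r < R -> p <= L -> band_label (band_edge r p) = r.+1.
Proof.
move=> r_lt p_le; rewrite /band_label.
case: pickP => [rp /eqP eq_rp | /(_ (Ordinal r_lt, Ordinal (p_le : p < L.+1)))].
  by case: (band_edge_inj r_lt (ltn_ord rp.1) p_le (ltn_ord rp.2 : rp.2 <= L) eq_rp) => ->.
by rewrite eqxx.
Qed.

Lemma mem_band_edges r p : r < R -> p <= L -> band_edge r p \in band_edges.
Proof.
by move=> r_lt p_le; apply/imsetP; exists (Ordinal r_lt, Ordinal (p_le : p < L.+1)).
Qed.

Lemma band_edgesP e : e \in band_edges ->
  exists r p, [/\ r < R, p <= L, e = band_edge r p & band_label e = r.+1].
Proof.
case/imsetP=> -[r p] _ ->; have p_le : p <= L by rewrite -ltnS.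
by exists r, p; split; rewrite ?band_label_edge.
Qed.

Lemma card_band_edge r p : r < R -> p <= L -> #|band_edge r p| = 2.
Proof.
move=> r_lt p_le; rewrite cards2; case: eqP => // /(congr1 (band_pos r.+1)).
by rewrite !band_pos_vertex //; lia.
Qed.

Lemma band_pos_edge x y : [set x; y] \in band_edges ->
  Z.abs (band_pos (band_label [set x; y]) x - band_pos (band_label [set x; y]) y) = 1%Z.
Proof.
case/band_edgesP=> r [p [r_lt p_le /eq_set2 eq_ends ->]].
by case: eq_ends => -[-> ->]; rewrite !band_pos_vertex //; lia.
Qed.

Lemma band_edge_of_pos x y r (p : nat) : r < R -> p <= L ->
  [set x; y] \in band_edges -> band_label [set x; y] = r.+1 ->
  band_pos r.+1 x = Z.of_nat p -> band_pos r.+1 y = (Z.of_nat p + 1)%Z ->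
  [set x; y] = band_edge r p.
Proof.
move=> r_lt p_le /band_edgesP[r' [p' [r'_lt p'_le e_xy ->]]] [eq_r'].
rewrite e_xy -eq_r' => x_pos y_pos; suff -> : p' = p by [].
move: e_xy x_pos y_pos => /eq_set2[] [-> ->].
all: by rewrite !band_pos_vertex ?(leqW p'_le) //; lia.
Qed.

Lemma band_label_target x r : r < R ->
  [set x; vertex r L.+1] \in band_edges -> band_label [set x; vertex r L.+1] = r.+1.
Proof.
move=> r_lt /band_edgesP[r' [p' [r'_lt p'_le e_xt ->]]].
have t_idx : band_index r L.+1 = A + B + 1 + r by case: band_indexP; lia.
have := band_offset_le r'_lt; have := band_edge_ends r'_lt p'_le.
have /set2P[] : vertex r L.+1 \in band_edge r' p' by rewrite -e_xt set22.
all: move=> /(congr1 (@nat_of_ord _)); rewrite !vertexE ?(leqW p'_le) // t_idx.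
all: lia.
Qed.

Lemma band_walk r k j : r < R -> k + j <= L.+1 ->
  [/\ path (fun x y => [set x; y] \in band_edges) (vertex r k)
         [seq vertex r i | i <- iota k.+1 j],
      pairmap (fun x y => band_label [set x; y]) (vertex r k)
         [seq vertex r i | i <- iota k.+1 j] = nseq j r.+1
    & last (vertex r k) [seq vertex r i | i <- iota k.+1 j] = vertex r (k + j)].
Proof.
move=> r_lt; elim: j k => [|j IHj] k kj /=; first by rewrite addn0.
have [|walk_j labels_j last_j] := IHj k.+1; first lia.
have k_le : k <= L by lia.
rewrite (mem_band_edges r_lt k_le : [set vertex r k; vertex r k.+1] \in _).
rewrite (band_label_edge r_lt k_le : band_label [set vertex r k; vertex r k.+1] = _).
by rewrite walk_j labels_j last_j addnS.
Qed.

Lemma band_tpath r : r < R ->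
  is_tpath band_edges band_label ord0 (vertex r L.+1) [seq vertex r i | i <- iota 1 L.+1].
Proof.
move=> r_lt.
have [walk_r labels_r last_r] := band_walk (k := 0) (j := L.+1) r_lt (leqnn _).
rewrite /is_tpath -(vertex0 r) last_r walk_r labels_r sorted_nseq // eqxx !andbT.
rewrite -[vertex r 0 :: _]/(map (vertex r) (iota 0 L.+2)) map_inj_in_uniq ?iota_uniq //.
move=> i j; rewrite !mem_iota !add0n => i_le j_le /(congr1 (band_pos r.+1)).
by rewrite !band_pos_vertex //; lia.
Qed.

Lemma band_edge_in_spanner beta EH r p : beta < D -> r < R -> p <= L ->
  ss_additive_spanner band_edges band_label ord0 beta EH -> band_edge r p \in EH.
Proof.
move=> beta_lt r_lt p_le spanner; have [/subsetP sub_EH _] := spanner.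
have [|q q_tpath q_size] := spanner_short_tpath spanner (band_tpath r_lt).
  by rewrite size_map size_iota; lia.
rewrite size_map size_iota in q_size.
have pos_EH x y (xy_EH : [set x; y] \in EH) := band_pos_edge (sub_EH _ xy_EH).
have target_EH x (xt_EH : [set x; vertex r L.+1] \in EH) :=
  band_label_target r_lt (sub_EH _ xt_EH).
have [||x [y [xy_EH lab_xy x_pos y_pos]]] := short_tpath_crossing
  pos_EH band_pos_desc band_pos0 (p := Z.of_nat p) q_tpath target_EH.
1,2: by rewrite band_pos_vertex //; lia.
by rewrite -(band_edge_of_pos r_lt p_le (sub_EH _ xy_EH) lab_xy x_pos y_pos).
Qed.

Lemma card_band_edges : #|band_edges| = R * L.+1.
Proof.
rewrite card_imset ?card_prod ?card_ord // => -[r p] [r' p'] /= eq_rp.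
have [eq_r eq_p] := band_edge_inj (ltn_ord r) (ltn_ord r') (ltn_ord p) (ltn_ord p') eq_rp.
by congr pair; apply: val_inj.
Qed.

Lemma band_graph_temporal : temporal_graph band_edges band_label.
Proof.
by split=> e /band_edgesP[r [p [r_lt p_le -> lab]]]; rewrite ?card_band_edge ?lab.
Qed.

Lemma band_spanner_size beta EH : beta < D ->
  ss_additive_spanner band_edges band_label ord0 beta EH -> R * L.+1 <= #|EH|.
Proof.
move=> beta_lt spanner; rewrite -card_band_edges; apply/subset_leq_card/subsetP.
move=> _ /imsetP[[r p] _ ->]; apply: band_edge_in_spanner spanner => //.
by rewrite -ltnS.
Qed.
End Graph.
End Bands.

Theorem theorem13 :
  exists c n0 : nat, 0 < c /\
    forall (n beta : nat), 0 < n -> n0 <= n ->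
      exists (E : {set {set 'I_n}}) (lam : {set 'I_n} -> nat) (s : 'I_n),
        temporal_graph E lam /\
        forall EH : {set {set 'I_n}}, ss_additive_spanner E lam s beta EH ->
          n ^ 2 <= c * (1 + beta) * #|EH|.
Proof.
exists 192, 8; split=> // -[//|m] beta _ n_ge8.
(* D > beta rules out detours and 3 <= D keeps the bands edge-disjoint. *)
set D := beta + 3; set L := m.+1 %/ 4; set R := (m.+1 %/ (16 * D)).+1.
have n_lt_L : m.+1 < L.+1 * 4 by rewrite ltn_ceil.
have n_lt_R : m.+1 < R * (16 * D) by rewrite ltn_ceil //; lia.
have L_le : L * 4 <= m.+1 by rewrite leq_divM.
have R_le : (R - 1) * (16 * D) <= m.+1 by rewrite subn1 leq_divM.
have DR_ge : 3 * (R - 1) <= D * (R - 1) by rewrite leq_mul2r leq_addl orbT.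
have L_gt0 : 0 < L by lia.
have D_ge3 : 3 <= D by rewrite leq_addl.
have fit : L + D * (R - 1) + (L + 2 * (D * (R - 1))) + R <= m by lia.
have beta_lt : beta < D by rewrite /D; lia.
exists (band_edges L D R m), (@band_label L D R m), ord0.
split=> [|EH spanner]; first exact: band_graph_temporal.
have EH_ge := band_spanner_size L_gt0 D_ge3 fit beta_lt spanner.
rewrite -mulnn (leq_trans (leq_mul (ltnW n_lt_L) (ltnW n_lt_R))) //.
have -> : L.+1 * 4 * (R * (16 * D)) = 64 * D * (R * L.+1) by lia.
by rewrite leq_mul // /D; lia.
Qed.
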